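(* Let $0\le c<1$ and $0\le\delta\le q$ with $q>0$, and let $\mathbf A(\mu)=\begin{bmatrix}0&1-\delta\mu\\-c&1+c-q\mu\end{bmatrix}$. For any $k\ge1$ and any $\mu_1,\dots,\mu_k\in\big[0,\frac{(1-c)^2}{q-c\delta}\big]$, $$\Big\|\prod_{i=1}^k\mathbf A(\mu_i)\Big\|\le\frac{4}{1-c}.$$
   Context: $\|\cdot\|$ denotes the spectral norm; the product is an ordered matrix product. *)

From HB Require Import structures.
From mathcomp Require Import all_boot all_order all_algebra.
From mathcomp Require Import boolp classical_sets reals.
Set Implicit Arguments. Unset Strict Implicit. Unset Printing Implicit Defensive.
Import Order.TTheory GRing.Theory Num.Theory.
Local Open Scope ring_scope.
Local Open Scope classical_set_scope.

Definition vnorm2 (R : realType) (n : nat) (x : 'cV[R]_n) : R :=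
  Num.sqrt (\sum_(i < n) x i 0 ^+ 2).

Definition spec_norm (R : realType) (m n : nat) (A : 'M[R]_(m, n)) : R :=
  sup [set vnorm2 (A *m x) | x in [set x : 'cV[R]_n | vnorm2 x = 1]].

Definition Amat (R : realType) (c delta q mu : R) : 'M[R]_2 :=
  \matrix_(i < 2, j < 2)
    (if i == 0 :> nat then (if j == 0 :> nat then 0 else 1 - delta * mu)
     else (if j == 0 :> nat then - c else 1 + c - q * mu)).

(* In the coordinates u = x_2 - c x_1, v = x_1 - x_2 every factor A(mu) acts as
   [[1 - a, -a c], [b, c (1 + b)]] with a = mu (q - c delta) / (1 - c) and
   b = mu (q - delta) / (1 - c), so that 0 <= b <= a <= 1 - c on the admissible
   range of mu; such a matrix is a Euclidean contraction.  Hence the quadratic form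
   W(x) = u^2 + v^2 does not increase along the product.  Since
   (1 - c)^2 |x|^2 <= 4 W(x) <= 16 |x|^2, every unit vector is mapped to a vector of
   length at most 4 / (1 - c). *)
From HB Require Import structures.
From mathcomp Require Import all_boot all_order all_algebra.
From mathcomp Require Import boolp classical_sets reals.
From mathcomp Require Import ring lra.
Set Implicit Arguments. Unset Strict Implicit. Unset Printing Implicit Defensive.
Import Order.TTheory GRing.Theory Num.Theory.
Local Open Scope ring_scope.

Lemma quad_form2_ge0 (R : realFieldType) (p q r x y : R) :
  0 <= p -> 0 <= r -> q ^+ 2 <= p * r -> 0 <= p * x ^+ 2 + 2 * q * x * y + r * y ^+ 2.
Proof.
move=> p0 r0 hqpr; have [pz|pn0] := eqVneq p 0.
  rewrite pz mul0r in hqpr.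
  have -> : q = 0 by apply/eqP; rewrite -sqrf_eq0 eq_le hqpr sqr_ge0.
  by rewrite pz; nra.
have pp : 0 < p by rewrite lt_def pn0 p0.
rewrite -(pmulr_rge0 _ pp).
have -> : p * (p * x ^+ 2 + 2 * q * x * y + r * y ^+ 2)
          = (p * x + q * y) ^+ 2 + (p * r - q ^+ 2) * y ^+ 2 by ring.
by rewrite addr_ge0 ?sqr_ge0 // mulr_ge0 ?sqr_ge0 ?subr_ge0.
Qed.

Lemma contraction_uv (R : realFieldType) (c a b u v : R) :
  0 <= c -> c < 1 -> 0 <= b -> b <= a -> a <= 1 - c ->
  ((1 - a) * u - a * c * v) ^+ 2 + (b * u + c * (1 + b) * v) ^+ 2 <= u ^+ 2 + v ^+ 2.
Proof.
move=> c0 c1 b0 ba ac; have a0 : 0 <= a by apply: le_trans ba.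
set N00 := 1 - (1 - a) ^+ 2 - b ^+ 2.
set N11 := 1 - a ^+ 2 * c ^+ 2 - c ^+ 2 * (1 + b) ^+ 2.
set N01 := a * c * (1 - a) - b * c * (1 + b).
have -> : ((1 - a) * u - a * c * v) ^+ 2 + (b * u + c * (1 + b) * v) ^+ 2
          = u ^+ 2 + v ^+ 2 - (N00 * u ^+ 2 + 2 * N01 * u * v + N11 * v ^+ 2).
  by rewrite /N00 /N01 /N11; ring.
rewrite gerBl; apply: quad_form2_ge0; rewrite /N00 /N11.
- nra.
- have h1 : c ^+ 2 * (a ^+ 2 + (1 + b) ^+ 2) <= c ^+ 2 * ((1 - c) ^+ 2 + (2 - c) ^+ 2).
    by apply: ler_wpM2l; nra.
  have h2 : c ^+ 2 * ((1 - c) ^+ 2 + (2 - c) ^+ 2) <= 1.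
    rewrite -subr_ge0.
    have -> : 1 - c ^+ 2 * ((1 - c) ^+ 2 + (2 - c) ^+ 2)
              = (1 - c) ^+ 2 * (1 + 2 * c - 2 * c ^+ 2) by ring.
    apply: mulr_ge0; nra.
  nra.
- rewrite -subr_ge0.
  have -> : N00 * N11 - N01 ^+ 2 = (a - b) * (a + b + 2 * a * c ^+ 2)
       + 2 * a * ((1 + c ^+ 2) * (1 - c - a)) + 2 * a * (c * (1 - c) ^+ 2).
    by rewrite /N00 /N01 /N11; ring.
  rewrite !addr_ge0 ?mulr_ge0 ?subr_ge0 //; nra.
Qed.

Lemma sum_ord2 (R : nmodType) (f : 'I_2 -> R) : \sum_(i < 2) f i = f 0 + f 1.
Proof. by rewrite big_ord_recr big_ord1; congr (f _ + f _); apply: val_inj. Qed.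

Lemma vnorm2_col2 (R : realType) (x : 'cV[R]_2) :
  vnorm2 x ^+ 2 = x 0 0 ^+ 2 + x 1 0 ^+ 2.
Proof. by rewrite /vnorm2 sum_ord2 sqr_sqrtr // addr_ge0 ?sqr_ge0. Qed.

Section Lyapunov.
Variables (R : realType) (c : R).
Hypotheses (hc0 : 0 <= c) (hc1 : c < 1).

Definition lyap (x : 'cV[R]_2) : R := (x 1 0 - c * x 0 0) ^+ 2 + (x 0 0 - x 1 0) ^+ 2.

Lemma lyap_Amat_le (delta q mu : R) (x : 'cV[R]_2) :
  0 <= delta -> delta <= q -> 0 < q -> 0 <= mu <= (1 - c) ^+ 2 / (q - c * delta) ->
  lyap (Amat c delta q mu *m x) <= lyap x.
Proof.
move=> d0 dq q0 /andP[m0 m1].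
have cp : 0 < 1 - c by rewrite subr_gt0.
have qcd : 0 < q - c * delta.
  have -> : q - c * delta = (1 - c) * q + c * (q - delta) by ring.
  by rewrite ltr_pwDl ?mulr_gt0 ?mulr_ge0 ?subr_ge0.
set a := mu * (q - c * delta) / (1 - c); set b := mu * (q - delta) / (1 - c).
rewrite /lyap !mxE !sum_ord2 !mxE /=.
set x0 := x 0 0; set x1 := x 1 0.
have cn0 : 1 - c != 0 by rewrite gt_eqF.
have -> : - c * x0 + (1 + c - q * mu) * x1 - c * (0 * x0 + (1 - delta * mu) * x1)
          = (1 - a) * (x1 - c * x0) - a * c * (x0 - x1) by rewrite /a; field.
have -> : 0 * x0 + (1 - delta * mu) * x1 - (- c * x0 + (1 + c - q * mu) * x1)
          = b * (x1 - c * x0) + c * (1 + b) * (x0 - x1) by rewrite /b; field.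
apply: contraction_uv => //.
- by rewrite /b divr_ge0 ?mulr_ge0 ?subr_ge0 // ltW.
- rewrite /a /b ler_pM2r ?invr_gt0 //; apply: ler_wpM2l => //.
  by rewrite lerD2l lerN2 ler_piMl // ltW.
- by rewrite /a ler_pdivrMr // -expr2 -ler_pdivlMr.
Qed.

Lemma lyap_prod_le (delta q : R) (k : nat) (mu : 'I_k -> R) (x : 'cV[R]_2) :
  0 <= delta -> delta <= q -> 0 < q ->
  (forall i, 0 <= mu i <= (1 - c) ^+ 2 / (q - c * delta)) ->
  lyap ((\prod_(i < k) Amat c delta q (mu i)) *m x) <= lyap x.
Proof.
move=> d0 dq q0 hmu; elim/big_ind: _ x => [x|M N hM hN x|i _ x].
- by rewrite mul1mx.
- by rewrite -mulmxE -mulmxA (le_trans (hM _) (hN _)).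
- exact: lyap_Amat_le.
Qed.

Lemma lyap_le_vnorm2 (x : 'cV[R]_2) : lyap x <= 4 * vnorm2 x ^+ 2.
Proof.
rewrite vnorm2_col2 /lyap; set x0 := x 0 0; set x1 := x 1 0.
have cx0 : c ^+ 2 * x0 ^+ 2 <= x0 ^+ 2 by rewrite ler_piMl ?sqr_ge0 // exprn_ile1 // ltW.
have := sqr_ge0 (x1 + c * x0); have := sqr_ge0 (x0 + x1); nra.
Qed.

Lemma vnorm2_le_lyap (x : 'cV[R]_2) : (1 - c) ^+ 2 * vnorm2 x ^+ 2 <= 4 * lyap x.
Proof.
rewrite vnorm2_col2 /lyap; set x0 := x 0 0; set x1 := x 1 0.
set u := x1 - c * x0; set v := x0 - x1.
have -> : (1 - c) ^+ 2 * (x0 ^+ 2 + x1 ^+ 2) = (u + v) ^+ 2 + (u + c * v) ^+ 2.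
  by rewrite /u /v; ring.
have cv : c ^+ 2 * v ^+ 2 <= v ^+ 2 by rewrite ler_piMl ?sqr_ge0 // exprn_ile1 // ltW.
have := sqr_ge0 (u - v); have := sqr_ge0 (u - c * v); nra.
Qed.

End Lyapunov.

Lemma spec_norm_le (R : realType) (m n : nat) (A : 'M[R]_(m, n)) (C : R) :
  0 <= C -> (forall x, vnorm2 x = 1 -> vnorm2 (A *m x) <= C) -> spec_norm A <= C.
Proof.
move=> C0 hA; rewrite /spec_norm.
set E := image _ _.
have [E0|E0] := pselect (exists e, E e).
  by apply: ge_sup => // _ [y y1 <-]; exact: hA.
by rewrite sup_out // => -[].
Qed.

Theorem mainTheorem9 (R : realType) (c delta q : R)
  (hc0 : 0 <= c) (hc1 : c < 1) (hd0 : 0 <= delta) (hdq : delta <= q) (hq : 0 < q)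
  (k : nat) (hk : (1 <= k)%N) (mu : 'I_k -> R)
  (hmu : forall i, 0 <= mu i <= (1 - c) ^+ 2 / (q - c * delta)) :
  spec_norm (\prod_(i < k) Amat c delta q (mu i)) <= 4 / (1 - c).
Proof.
have cp : 0 < 1 - c by rewrite subr_gt0.
have C0 : 0 <= 4 / (1 - c) by rewrite divr_ge0 // ltW.
apply: spec_norm_le => // x x1.
set y := _ *m x.
have hy : (1 - c) ^+ 2 * vnorm2 y ^+ 2 <= 4 ^+ 2.
  apply: le_trans (vnorm2_le_lyap hc0 hc1 y) _.
  have := lyap_prod_le hc0 hc1 x hd0 hdq hq hmu; have := lyap_le_vnorm2 hc0 hc1 x.
  rewrite x1 expr1n -/y; nra.
rewrite -(ler_pXn2r (isT : (0 < 2)%N)) ?nnegrE ?sqrtr_ge0 //.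
by rewrite expr_div_n ler_pdivlMr ?exprn_gt0 // mulrC.
Qed.
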